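(* For every $\alpha\in\mathbb{N}_0$ and $y\in C^{(2\alpha+4)}(0,\infty)$, $$L_{2\alpha+4,x}^{\alpha}y(x)=-\Big\{L_{2,x}^{2\alpha+1}-\frac{2\alpha+2}{x}-\alpha-1\Big\}L_{2\alpha+2,x}^{\alpha-1}y(x),\qquad x>0.$$
   Context: $D_x^i$ is the $i$-fold derivative. For integer $\alpha\ge-1$, $L_{2\alpha+4,x}^{\alpha}y(x)=(-1)^{\alpha+1}e^x x\,D_x^{\alpha+2}\{e^{-x}D_x^{\alpha+2}[x^{\alpha+1}y(x)]\}$; in particular for $\alpha=-1$ this gives $L_{2,x}^{-1}y=x[y''-y']$. For real $\gamma$, $L_{2,x}^{\gamma}=xD_x^2+(\gamma+1-x)D_x$ (consistent with the previous at $\gamma=-1$). *)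

From Stdlib Require Import Reals Lra ClassicalEpsilon.
Open Scope R_scope.

(* Total derivative operator: the derivative of f at x when it exists
   (chosen by epsilon; derivatives are unique), arbitrary otherwise. *)
Definition deriv (f : R -> R) (x : R) : R :=
  epsilon (inhabits 0) (fun l => derivable_pt_lim f x l).

Definition Dn (n : nat) (f : R -> R) : R -> R := Nat.iter n deriv f.

Definition Cn_pos (n : nat) (y : R -> R) : Prop :=
  (forall k : nat, (k < n)%nat -> forall x, 0 < x ->
      derivable_pt_lim (Dn k y) x (Dn (S k) y x)) /\
  (forall x, 0 < x -> continuity_pt (Dn n y) x).

(* L_{2a+4,x}^{a} y(x) = (-1)^(a+1) e^x x D^(a+2){ e^(-x) D^(a+2)[x^(a+1) y(x)] }
   for integer a >= -1, indexed here by m = a+1 : nat.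
   So Lhigh m = L_{2m+2,x}^{m-1}. *)
Definition Lhigh (m : nat) (y : R -> R) (x : R) : R :=
  (-1) ^ m * exp x * x *
  Dn (S m) (fun t => exp (- t) * Dn (S m) (fun s => s ^ m * y s) t) x.

Definition L2 (gamma : R) (g : R -> R) (x : R) : R :=
  x * Dn 2 g x + (gamma + 1 - x) * Dn 1 g x.

(* Write [w := e^{-x} D^{a+1}[x^a y]], so that [L^{a-1}_{2a+2} y = (-1)^a e^x x D^{a+1} w].
   Leibniz's rule for a factor [x] gives [D^{a+2}[x^{a+1} y] = x D^{a+2}[x^a y] + (a+2) D^{a+1}[x^a y]],
   and multiplying by [e^{-x}] turns this into [x (w' + w) + (a+2) w].  Hence both sides of the
   identity are [e^x] times explicit combinations of [D^{a+1} w], [D^{a+2} w], [D^{a+3} w] with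
   polynomial coefficients, and they agree.  Since [y] is only assumed smooth on [(0,oo)], every
   derivative is computed locally there. *)

From Stdlib Require Import Reals Lra Lia ClassicalEpsilon.
Open Scope R_scope.

Definition eq_pos (f g : R -> R) : Prop := forall t, 0 < t -> f t = g t.

Definition has_derivs_pos (n : nat) (f : R -> R) : Prop :=
  forall k, (k < n)%nat -> forall x, 0 < x ->
    derivable_pt_lim (Dn k f) x (Dn (S k) f x).

Lemma Dn_add k j f : Dn (k + j) f = Dn k (Dn j f).
Proof. exact (Nat.iter_add k j _ deriv f). Qed.

Lemma deriv_unique f x l : derivable_pt_lim f x l -> deriv f x = l.
Proof.
  intros H. unfold deriv.
  assert (E : exists l, derivable_pt_lim f x l) by (exists l; exact H).
  eapply uniqueness_limite; [apply (epsilon_spec (inhabits 0) _ E) | exact H].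
Qed.

Lemma derivable_pt_lim_eq_pos f g x l :
  eq_pos f g -> 0 < x -> derivable_pt_lim g x l -> derivable_pt_lim f x l.
Proof.
  intros Hfg Hx Hg eps Heps.
  destruct (Hg eps Heps) as [d Hd].
  assert (Hd' : 0 < Rmin d x) by (apply Rmin_pos; [apply cond_pos | exact Hx]).
  exists (mkposreal _ Hd'). intros h Hh0 Hh. simpl in Hh.
  pose proof (Rmin_l d x). pose proof (Rmin_r d x).
  assert (Hxh : 0 < x + h) by (unfold Rabs in Hh; destruct (Rcase_abs h); lra).
  rewrite (Hfg (x + h) Hxh), (Hfg x Hx).
  apply Hd; [exact Hh0 | lra].
Qed.

Lemma derivable_pt_lim_exp_opp x :
  derivable_pt_lim (fun t => exp (- t)) x (- exp (- x)).
Proof.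
  replace (- exp (- x)) with (exp (- x) * -1) by ring.
  apply (derivable_pt_lim_comp (fun t => - t) exp).
  - apply (derivable_pt_lim_opp (fun t => t)), derivable_pt_lim_id.
  - apply derivable_pt_lim_exp.
Qed.

Lemma Dn_chain (f : R -> R) (F : nat -> R -> R) n :
  eq_pos f (F 0%nat) ->
  (forall k, (k < n)%nat -> forall x, 0 < x -> derivable_pt_lim (F k) x (F (S k) x)) ->
  (forall k, (k <= n)%nat -> eq_pos (Dn k f) (F k)) /\ has_derivs_pos n f.
Proof.
  intros H0 HF.
  assert (E : forall k, (k <= n)%nat -> eq_pos (Dn k f) (F k)).
  { induction k as [|k IH]; intros Hk t Ht; [exact (H0 t Ht) |].
    apply deriv_unique, derivable_pt_lim_eq_pos with (F k); [apply IH; lia | exact Ht |].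
    apply HF; [lia | exact Ht]. }
  split; [exact E |].
  intros k Hk x Hx. rewrite (E (S k) ltac:(lia) x Hx).
  apply derivable_pt_lim_eq_pos with (F k); [apply E; lia | exact Hx | apply HF; assumption].
Qed.

Lemma Dn_eq_pos f g n : eq_pos f g -> has_derivs_pos n g ->
  (forall k, (k <= n)%nat -> eq_pos (Dn k f) (Dn k g)) /\ has_derivs_pos n f.
Proof. intros H Hg. apply (Dn_chain f (fun k => Dn k g)); assumption. Qed.

Lemma Dn_lincomb a b f g n : has_derivs_pos n f -> has_derivs_pos n g ->
  (forall k, (k <= n)%nat ->
     eq_pos (Dn k (fun t => a * f t + b * g t)) (fun t => a * Dn k f t + b * Dn k g t))
  /\ has_derivs_pos n (fun t => a * f t + b * g t).
Proof.
  intros Hf Hg. apply (Dn_chain _ (fun k t => a * Dn k f t + b * Dn k g t)).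
  - intros t _. reflexivity.
  - intros k Hk x Hx.
    apply derivable_pt_lim_plus; apply derivable_pt_lim_scal; apply Hf || apply Hg; assumption.
Qed.

Lemma Dn_mulx u n : has_derivs_pos n u ->
  (forall k, (k <= n)%nat ->
     eq_pos (Dn k (fun t => t * u t)) (fun t => t * Dn k u t + INR k * Dn (pred k) u t))
  /\ has_derivs_pos n (fun t => t * u t).
Proof.
  intros Hu. apply (Dn_chain _ (fun k t => t * Dn k u t + INR k * Dn (pred k) u t)).
  - intros t _. simpl. ring.
  - intros k Hk x Hx.
    replace (x * Dn (S k) u x + INR (S k) * Dn (pred (S k)) u x)
      with (1 * Dn k u x + x * Dn (S k) u x + INR k * Dn (S (pred k)) u x)
      by (destruct k; simpl pred; rewrite ?S_INR; simpl; ring).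
    apply derivable_pt_lim_plus.
    + apply (derivable_pt_lim_mult (fun t => t)); [apply derivable_pt_lim_id | apply Hu; assumption].
    + apply derivable_pt_lim_scal, Hu; [lia | exact Hx].
Qed.

Lemma has_derivs_pos_le n m f : has_derivs_pos n f -> (m <= n)%nat -> has_derivs_pos m f.
Proof. intros H Hm k Hk. apply H. lia. Qed.

Lemma has_derivs_pos_Dn n j f : has_derivs_pos (n + j) f -> has_derivs_pos n (Dn j f).
Proof.
  intros H k Hk x Hx. rewrite <- !Dn_add.
  apply (H (k + j)%nat); [lia | exact Hx].
Qed.

Lemma has_derivs_pos_S f f' n :
  (forall x, 0 < x -> derivable_pt_lim f x (f' x)) -> has_derivs_pos n f' ->
  has_derivs_pos (S n) f.
Proof.
  intros Hf Hf'.
  assert (E1 : eq_pos (Dn 1 f) f') by (intros t Ht; apply deriv_unique, Hf, Ht).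
  destruct (Dn_eq_pos _ _ n E1 Hf') as [_ H1].
  intros [|k] Hk x Hx.
  - change (derivable_pt_lim f x (deriv f x)). rewrite (deriv_unique _ _ _ (Hf x Hx)). auto.
  - replace (Dn (S (S k)) f) with (Dn (S k) (Dn 1 f)) by (rewrite <- Dn_add; f_equal; lia).
    replace (Dn (S k) f) with (Dn k (Dn 1 f)) by (rewrite <- Dn_add; f_equal; lia).
    apply H1; [lia | exact Hx].
Qed.

Lemma has_derivs_pos_mul_exp_opp n v :
  has_derivs_pos n v -> has_derivs_pos n (fun t => exp (- t) * v t).
Proof.
  revert v; induction n as [|n IH]; intros v Hv; [intros k Hk; lia |].
  apply (has_derivs_pos_S _ (fun t => exp (- t) * (1 * Dn 1 v t + (-1) * v t))).
  - intros x Hx.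
    replace (exp (- x) * (1 * Dn 1 v x + -1 * v x))
      with (- exp (- x) * v x + exp (- x) * Dn 1 v x) by ring.
    apply (derivable_pt_lim_mult (fun t => exp (- t)));
      [apply derivable_pt_lim_exp_opp | apply (Hv 0%nat); [lia | exact Hx]].
  - apply IH, Dn_lincomb.
    + apply has_derivs_pos_Dn. rewrite Nat.add_1_r. exact Hv.
    + apply has_derivs_pos_le with (S n); [exact Hv | lia].
Qed.

Lemma has_derivs_pos_mul_pow n y j :
  has_derivs_pos n y -> has_derivs_pos n (fun s => s ^ j * y s).
Proof.
  intros Hy. induction j as [|j IH].
  - apply (Dn_eq_pos _ y n); [intros t _; simpl; ring | exact Hy].
  - apply (Dn_eq_pos _ (fun t => t * (t ^ j * y t)) n); [intros t _; simpl; ring |].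
    apply Dn_mulx, IH.
Qed.

Lemma L2_exp_mul gamma c g x : has_derivs_pos 2 g -> 0 < x ->
  L2 gamma (fun t => c * exp t * t * g t) x =
  c * exp x * (x ^ 2 * Dn 2 g x + (x ^ 2 + (gamma + 3) * x) * Dn 1 g x
               + ((gamma + 2) * x + gamma + 1) * g x).
Proof.
  intros Hg Hx.
  set (F := fun k t => match k with
            | O => c * exp t * t * g t
            | 1%nat => c * exp t * (t * g t + g t + t * Dn 1 g t)
            | _ => c * exp t * (t * g t + 2 * g t + 2 * t * Dn 1 g t + 2 * Dn 1 g t
                                + t * Dn 2 g t)
            end).
  destruct (Dn_chain (fun t => c * exp t * t * g t) F 2) as [DF _].
  { intros t _. reflexivity. }
  { intros [|[|k]] Hk t Ht; [| | lia]; cbv beta iota delta [F].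
    - replace (c * exp t * (t * g t + g t + t * Dn 1 g t))
        with ((c * exp t * t + c * exp t * 1) * g t + c * exp t * t * Dn 1 g t) by ring.
      apply (derivable_pt_lim_mult (fun s => c * exp s * s));
        [apply (derivable_pt_lim_mult (fun s => c * exp s));
           [apply derivable_pt_lim_scal, derivable_pt_lim_exp | apply derivable_pt_lim_id]
        | apply (Hg 0%nat); [lia | exact Ht]].
    - replace (c * exp t * (t * g t + 2 * g t + 2 * t * Dn 1 g t + 2 * Dn 1 g t + t * Dn 2 g t))
        with (c * exp t * (t * g t + g t + t * Dn 1 g t)
              + c * exp t * (1 * g t + t * Dn 1 g t + Dn 1 g t
                             + (1 * Dn 1 g t + t * Dn 2 g t))) by ring.
      apply (derivable_pt_lim_mult (fun s => c * exp s)
               (fun s => s * g s + g s + s * Dn 1 g s));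
        [apply derivable_pt_lim_scal, derivable_pt_lim_exp |].
      assert (Hg0 := Hg 0%nat ltac:(lia) t Ht). assert (Hg1 := Hg 1%nat ltac:(lia) t Ht).
      apply derivable_pt_lim_plus; [apply derivable_pt_lim_plus |].
      + apply (derivable_pt_lim_mult (fun s => s) g); [apply derivable_pt_lim_id | exact Hg0].
      + exact Hg0.
      + apply (derivable_pt_lim_mult (fun s => s) (Dn 1 g)); [apply derivable_pt_lim_id | exact Hg1]. }
  unfold L2. rewrite (DF 2%nat ltac:(lia) x Hx), (DF 1%nat ltac:(lia) x Hx).
  cbv beta iota delta [F]. ring.
Qed.

Definition Lkernel (m : nat) (y : R -> R) (t : R) : R :=
  exp (- t) * Dn (S m) (fun s => s ^ m * y s) t.

Lemma Lhigh_Lkernel m y :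
  Lhigh m y = fun t => (-1) ^ m * exp t * t * Dn (S m) (Lkernel m y) t.
Proof. reflexivity. Qed.

Section Lkernel.

Variables (m : nat) (y : R -> R).
Hypothesis Hy : has_derivs_pos (2 * m + 4) y.

Let u := fun s => s ^ m * y s.
Let w := Lkernel m y.

Lemma has_derivs_pos_Lkernel : has_derivs_pos (m + 3) w.
Proof.
  apply has_derivs_pos_mul_exp_opp, has_derivs_pos_Dn.
  replace (m + 3 + S m)%nat with (2 * m + 4)%nat by lia.
  apply has_derivs_pos_mul_pow, Hy.
Qed.

Lemma Lkernel_succ :
  eq_pos (Lkernel (S m) y) (fun t => t * (Dn 1 w t + w t) + (INR m + 2) * w t).
Proof.
  intros t Ht.
  assert (Hu : has_derivs_pos (m + 2) u)
    by (apply has_derivs_pos_le with (2 * m + 4)%nat; [apply has_derivs_pos_mul_pow, Hy | lia]).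
  destruct (Dn_mulx u _ Hu) as [Dn_xu Hxu].
  destruct (Dn_eq_pos (fun s => s ^ S m * y s) (fun s => s * u s) _
              ltac:(intros s _; unfold u; simpl; ring) Hxu) as [Dn_pow _].
  assert (Dw : Dn 1 w t = - exp (- t) * Dn (S m) u t + exp (- t) * Dn (S (S m)) u t).
  { apply deriv_unique, (derivable_pt_lim_mult (fun s => exp (- s)));
      [apply derivable_pt_lim_exp_opp | apply Hu; [lia | exact Ht]]. }
  unfold Lkernel at 1.
  rewrite (Dn_pow (S (S m)) ltac:(lia) t Ht), (Dn_xu (S (S m)) ltac:(lia) t Ht), Dw.
  unfold w, Lkernel. fold u. simpl pred. rewrite !S_INR. ring.
Qed.

Lemma Dn_Lkernel_succ k : (k <= m + 2)%nat ->
  eq_pos (Dn k (Lkernel (S m) y))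
    (fun t => t * (Dn (S k) w t + Dn k w t) + INR k * (Dn k w t + Dn (pred k) w t)
              + (INR m + 2) * Dn k w t).
Proof.
  revert k. apply Dn_chain.
  { intros t Ht. rewrite (Lkernel_succ t Ht). simpl. ring. }
  intros k Hk x Hx.
  assert (Hw : forall j, (j < m + 3)%nat -> derivable_pt_lim (Dn j w) x (Dn (S j) w x))
    by (intros j Hj; apply has_derivs_pos_Lkernel; assumption).
  replace (x * (Dn (S (S k)) w x + Dn (S k) w x) + INR (S k) * (Dn (S k) w x + Dn (pred (S k)) w x)
           + (INR m + 2) * Dn (S k) w x)
    with (1 * (Dn (S k) w x + Dn k w x) + x * (Dn (S (S k)) w x + Dn (S k) w x)
          + INR k * (Dn (S k) w x + Dn (S (pred k)) w x) + (INR m + 2) * Dn (S k) w x)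
    by (destruct k; simpl pred; rewrite ?S_INR; simpl; ring).
  apply derivable_pt_lim_plus; [apply derivable_pt_lim_plus |].
  - apply (derivable_pt_lim_mult (fun t => t) (fun t => Dn (S k) w t + Dn k w t));
      [apply derivable_pt_lim_id |].
    apply derivable_pt_lim_plus; apply Hw; lia.
  - apply derivable_pt_lim_scal, derivable_pt_lim_plus; apply Hw; lia.
  - apply derivable_pt_lim_scal, Hw; lia.
Qed.

Lemma Lhigh_succ x : 0 < x ->
  Lhigh (S m) y x =
  - (-1) ^ m * exp x * x *
    (x * Dn (S (S (S m))) w x + (x + 2 * (INR m + 2)) * Dn (S (S m)) w x
     + (INR m + 2) * Dn (S m) w x).
Proof.
  intros Hx. rewrite Lhigh_Lkernel; cbv beta.
  rewrite (Dn_Lkernel_succ (S (S m)) ltac:(lia) x Hx). simpl pred.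
  rewrite !S_INR. simpl pow. ring.
Qed.

End Lkernel.

Theorem theorem3p1 (alpha : nat) (y : R -> R)
  (hy : Cn_pos (2 * alpha + 4) y) (x : R) (hx : 0 < x) :
  Lhigh (S alpha) y x =
  - ( L2 (INR (2 * alpha + 1)) (Lhigh alpha y) x
      - INR (2 * alpha + 2) / x * Lhigh alpha y x
      - (INR alpha + 1) * Lhigh alpha y x ).
Proof.
  destruct hy as [Hy _].
  set (w := Lkernel alpha y).
  assert (Hw : has_derivs_pos 2 (Dn (S alpha) w)).
  { apply has_derivs_pos_Dn, has_derivs_pos_le with (alpha + 3)%nat;
      [exact (has_derivs_pos_Lkernel alpha y Hy) | lia]. }
  rewrite (Lhigh_succ alpha y Hy x hx), (Lhigh_Lkernel alpha y).
  rewrite (L2_exp_mul _ _ _ x Hw hx).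
  change (Dn 1 (Dn (S alpha) w) x) with (Dn (S (S alpha)) w x).
  change (Dn 2 (Dn (S alpha) w) x) with (Dn (S (S (S alpha))) w x).
  fold w. rewrite !plus_INR, !mult_INR. simpl INR. field. lra.
Qed.
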